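(* Suppose $\|\mu_a\|_\infty,\|\widehat\mu_a\|_\infty\le B<\infty$ a.s. for all $a$, and $\mathbb{P}$ satisfies the margin condition with some $\kappa>0$, $\alpha>0$. Let $C^*\in\mathcal{C}_k^*$. Then for each $a\in\mathcal{A}$, $$\mathbb{P}\big|\Pi_{C^*,a}(\widehat\mu)-\Pi_{C^*,a}(\mu)\big|\lesssim\max_j\big\|\mathbb{1}\{\zeta_j(\widehat\mu;C^* )>0\}-\mathbb{1}\{\zeta_j(\mu;C^* )>0\}\big\|_\infty\sum_a\|\widehat\mu_a-\mu_a\|_{\mathbb{P},1}+\sum_a\|\widehat\mu_a-\mu_a\|_\infty^\alpha.$$
   Context: $Z=(Y,A,X)\sim\mathbb{P}$, $A\in\mathcal{A}=\{1,\dots,p\}$; $\mu_a(X)=\mathbb{E}(Y\mid X,A=a)$, $\mu=(\mu_1(X),\dots,\mu_p(X))^\top$, and $\widehat\mu$ an estimator of $\mu$ (held fixed under $\mathbb{P}$). Codebooks $C=\{c_1,\dots,c_k\}\subset\mathbb{R}^p$; $\mathcal{C}_k$ the codebooks of size $k$ in the image of $\mu$; $\Pi_C(x)=\arg\min_{c\in C}\|c-x\|_2^2$ and $\Pi_{C,a}(x)$ its $a$-th coordinate; $R(C)=\mathbb{E}\|\mu-\Pi_C(\mu)\|_2^2$; $\mathcal{C}_k^*$ its set of minimizers. $\zeta_j(\bar\mu;C)=\min_{i\ne j}\|\bar\mu-c_i\|_2-\|\bar\mu-c_j\|_2$. $V_j(C^* )=\{x:\|x-c_j^*\|_2\le\|x-c_i^*\|_2\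 \forall i\ne j\}$; $N_{C^*}(t)=\bigcup_j\{x\in V_j(C^* ):|\,\|x-c_j^*\|_2-\min_{i\ne j}\|x-c_i^*\|_2\,|\le t\}$; margin condition (radius $\kappa$, rate $\alpha$): for $0\le t\le\kappa$, $\sup_{C^*\in\mathcal{C}_k^*}\mathbb{P}(\mu\in N_{C^*}(t))\lesssim t^\alpha$. $\|f\|_{\mathbb{P},1}=\int|f|d\mathbb{P}$, $\|\cdot\|_\infty$ sup norm, $\lesssim$ inequality up to a multiplicative constant. *)

From HB Require Import structures.
From mathcomp Require Import all_boot all_order all_algebra.
From mathcomp Require Import all_classical all_reals all_analysis ess_sup_inf.
Set Implicit Arguments. Unset Strict Implicit. Unset Printing Implicit Defensive.
Import Order.TTheory GRing.Theory Num.Theory.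
Import numFieldNormedType.Exports.
Local Open Scope classical_set_scope.
Local Open Scope ring_scope.

(* Vectors in R^p are functions 'I_p -> R; a codebook of size k is C : 'I_k -> R^p. *)
Section Defs.
Context {R : realType} {p k : nat}.

Definition sqdist (x y : 'I_p -> R) : R := \sum_(i < p) (x i - y i) ^+ 2.
Definition edist (x y : 'I_p -> R) : R := Num.sqrt (sqdist x y).

(* Pi_C(x) = argmin_{c in C} ||c - x||^2 ; ties broken by the smallest index *)
Definition nearest (C : 'I_k -> 'I_p -> R) (x : 'I_p -> R) : option 'I_k :=
  [pick j | [forall i, sqdist x (C j) <= sqdist x (C i)]].
Definition Pi (C : 'I_k -> 'I_p -> R) (x : 'I_p -> R) : 'I_p -> R :=
  match nearest C x with Some j => C j | None => fun _ => 0 end.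

(* min_{i <> j} ||x - c_i||  (= +oo when k = 1) *)
Definition minother (C : 'I_k -> 'I_p -> R) (j : 'I_k) (x : 'I_p -> R) : \bar R :=
  \big[Order.min/+oo%E]_(i | i != j) (edist x (C i))%:E.

Definition zeta (C : 'I_k -> 'I_p -> R) (j : 'I_k) (x : 'I_p -> R) : \bar R :=
  (minother C j x - (edist x (C j))%:E)%E.

Definition voronoi (C : 'I_k -> 'I_p -> R) (j : 'I_k) : set ('I_p -> R) :=
  [set x | forall i, i != j -> edist x (C j) <= edist x (C i)].

Definition margin_nbhd (C : 'I_k -> 'I_p -> R) (t : R) : set ('I_p -> R) :=
  \bigcup_(j in [set: 'I_k])
    [set x | voronoi C j x /\ (`| (edist x (C j))%:E - minother C j x | <= t%:E)%E].

Context {d : measure_display} {T : measurableType d}.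

Definition risk (P : probability T R) (mu : T -> 'I_p -> R) (C : 'I_k -> 'I_p -> R)
  : \bar R := (\int[P]_w (sqdist (mu w) (Pi C (mu w)))%:E)%E.

Definition codebook_in (mu : T -> 'I_p -> R) (C : 'I_k -> 'I_p -> R) : Prop :=
  injective C /\ forall j, exists w, mu w = C j.

Definition optimal (P : probability T R) (mu : T -> 'I_p -> R) (C : 'I_k -> 'I_p -> R)
  : Prop :=
  codebook_in mu C /\
  forall C' : 'I_k -> 'I_p -> R, codebook_in mu C' -> (risk P mu C <= risk P mu C')%E.

(* margin condition with radius kappa, rate alpha, and multiplicative constant cm:
   for 0 <= t <= kappa, sup_{C* in C_k^*} P(mu in N_{C*}(t)) <= cm * t^alpha *)
Definition margin_condition (P : probability T R) (mu : T -> 'I_p -> R)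
  (kappa alpha cm : R) : Prop :=
  forall t : R, 0 <= t -> t <= kappa ->
  forall C : 'I_k -> 'I_p -> R, optimal P mu C ->
    (P (mu @^-1` margin_nbhd C t) <= (cm * t `^ alpha)%:E)%E.

Definition supnorm (P : probability T R) (f : T -> R) : R :=
  fine (ess_sup P (fun w => (`|f w|)%:E)).
Definition L1norm (P : probability T R) (f : T -> R) : R :=
  fine (\int[P]_w (`|f w|)%:E)%E.

Definition ind_zeta (C : 'I_k -> 'I_p -> R) (j : 'I_k) (x : 'I_p -> R) : R :=
  ((0 < zeta C j x)%E)%:R.

End Defs.

(* Let c_j and c_i be the codewords of C* nearest to mu and to muhat. If they differ, the
   triangle inequality gives ||mu - c_i|| <= ||mu - c_j|| + 2 ||muhat - mu||, so mu lies in the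
   margin neighbourhood N_{C*}(t) with t = 2 sum_b ||muhat_b - mu_b||_oo, an event of
   probability O(t^alpha) by the margin condition. On that event the coordinate error
   |c_{i,a} - c_{j,a}| is bounded by a constant: optimality keeps every point of the box
   [-B, B]^p within bounded distance of its nearest codeword, since otherwise moving one codeword
   onto a data point would lower the risk. This bounds the error by the second term of the
   right-hand side alone. *)

From Pilot Require Import Defs.
From HB Require Import structures.
From mathcomp Require Import all_boot all_order all_algebra.
From mathcomp Require Import all_classical all_reals all_analysis ess_sup_inf measurable_realfun.
From mathcomp Require Import ring lra.
Import Order.TTheory GRing.Theory Num.Theory.
Import numFieldNormedType.Exports.
Local Open Scope classical_set_scope.
Local Open Scope ring_scope.
(* [Defs.edist] must shadow the extended distance [edist] of mathcomp-analysis. *)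
Import Defs.

Set Implicit Arguments. Unset Strict Implicit. Unset Printing Implicit Defensive.

Section Euclidean.
Context {R : realType} {p : nat}.
Implicit Types (x y z u v : 'I_p -> R) (B : R).

Definition in_box B x := forall a, `|x a| <= B.

Lemma sqdist_ge0 x y : 0 <= sqdist x y.
Proof. by apply: sumr_ge0 => i _; exact: sqr_ge0. Qed.

Lemma edistC x y : edist x y = edist y x.
Proof. by congr Num.sqrt; apply: eq_bigr => i _; rewrite -sqrrN opprB. Qed.

Lemma ler_edist x y z : (edist x y <= edist x z) = (sqdist x y <= sqdist x z).
Proof. by rewrite ler_sqrt // sqdist_ge0. Qed.

Lemma cauchy_schwarz u v :
  (\sum_i u i * v i) ^+ 2 <= (\sum_i u i ^+ 2) * (\sum_i v i ^+ 2).
Proof.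
set A := \sum_i u i ^+ 2; set S := \sum_i u i * v i; set C := \sum_i v i ^+ 2.
have A_ge0 : 0 <= A by apply: sumr_ge0 => i _; exact: sqr_ge0.
have C_ge0 : 0 <= C by apply: sumr_ge0 => i _; exact: sqr_ge0.
have discr t : 0 <= t ^+ 2 * A - 2 * t * S + C.
  have -> : t ^+ 2 * A - 2 * t * S + C = \sum_i (t * u i - v i) ^+ 2.
    rewrite /A /S /C !mulr_sumr -sumrN -!big_split /=.
    by apply: eq_bigr => i _; ring.
  by apply: sumr_ge0 => i _; exact: sqr_ge0.
have [A0|A_neq0] := eqVneq A 0.
  have u0 i : u i = 0.
    apply/eqP; rewrite -sqrf_eq0 eq_le sqr_ge0 andbT -A0 /A (bigD1 i) //= lerDl.
    by apply: sumr_ge0 => j _; exact: sqr_ge0.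
  by rewrite /S big1 ?expr0n ?mulr_ge0 // => i _; rewrite u0 mul0r.
have := discr (S / A).
have -> : (S / A) ^+ 2 * A - 2 * (S / A) * S + C = C - S ^+ 2 / A by field.
by rewrite subr_ge0 ler_pdivrMr ?lt_def ?A_neq0 // mulrC.
Qed.

Lemma edist_triangle x y z : edist x z <= edist x y + edist y z.
Proof.
have cross : \sum_i (x i - y i) * (y i - z i) <= edist x y * edist y z.
  rewrite -sqrtrM ?sqdist_ge0 //; apply: le_trans (ler_norm _) _.
  by rewrite -sqrtr_sqr ler_sqrt ?mulr_ge0 ?sqdist_ge0 //; exact: cauchy_schwarz.
rewrite -(@ler_pXn2r _ 2) // ?nnegrE ?addr_ge0 ?sqrtr_ge0 //.
rewrite sqrrD !sqr_sqrtr ?sqdist_ge0 //.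
have -> : sqdist x z = sqdist x y + 2 * \sum_i (x i - y i) * (y i - z i) + sqdist y z.
  by rewrite /sqdist mulr_sumr -!big_split /=; apply: eq_bigr => i _; ring.
lra.
Qed.

Lemma coord_le_edist x y a : `|x a - y a| <= edist x y.
Proof.
rewrite -sqrtr_sqr ler_sqrt ?sqdist_ge0 // /sqdist (bigD1 a) //= lerDl.
by apply: sumr_ge0 => i _; exact: sqr_ge0.
Qed.

Lemma edist_le_sum x y : edist x y <= \sum_i `|x i - y i|.
Proof.
have sum_ge0 : 0 <= \sum_i `|x i - y i| by exact: sumr_ge0.
rewrite -(ger0_norm sum_ge0) -sqrtr_sqr ler_sqrt ?sqr_ge0 //.
rewrite /sqdist expr2 mulr_suml; apply: ler_sum => i _.
rewrite -real_normK ?num_real // expr2 ler_wpM2l //.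
by rewrite (bigD1 i) //= lerDl; exact: sumr_ge0.
Qed.

Lemma edist_le_box B x y : in_box B x -> in_box B y -> edist x y <= p%:R * (2 * B).
Proof.
move=> xB yB; apply: le_trans (edist_le_sum x y) _.
have -> : p%:R * (2 * B) = \sum_(i < p) (2 * B).
  by rewrite sumr_const card_ord mulr_natl.
apply: ler_sum => i _.
by apply: le_trans (ler_normB _ _) _; have := xB i; have := yB i; lra.
Qed.

End Euclidean.

Section NearestCodeword.
Context {R : realType} {p k : nat}.
Implicit Types (x y : 'I_p -> R) (C : 'I_k -> 'I_p -> R).

Definition is_nearest C x j := forall i, sqdist x (C j) <= sqdist x (C i).

Lemma is_nearest_voronoi C x j : is_nearest C x j -> voronoi C j x.
Proof. by move=> xj i _; rewrite ler_edist. Qed.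

Lemma nearest_is_nearest C x j : nearest C x = Some j -> is_nearest C x j.
Proof. by rewrite /nearest; case: pickP => // j' /forallP j'_min [<-]. Qed.

Lemma nearest_some C x (i0 : 'I_k) : exists j, nearest C x = Some j.
Proof.
rewrite /nearest; case: pickP => [j _|none]; first by exists j.
have [j _ j_min] := arg_minP (fun i => sqdist x (C i)) (isT : xpredT i0).
by have /forallP := negbT (none j); case=> i; exact: j_min.
Qed.

Lemma Pi_nearest C x (i0 : 'I_k) : exists2 j, Pi C x = C j & is_nearest C x j.
Proof.
have [j xj] := nearest_some C x i0.
by exists j; [rewrite /Pi xj | exact: nearest_is_nearest].
Qed.

Lemma Pi_neq C x y : Pi C y <> Pi C x -> exists i j,
  [/\ i != j, Pi C y = C i, Pi C x = C j, is_nearest C y i & is_nearest C x j].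
Proof.
have no_nearest z : nearest C z = None -> 'I_k -> False.
  by move=> zN i0; have [j] := nearest_some C z i0; rewrite zN.
rewrite /Pi; case yi: (nearest C y) => [i|]; case xj: (nearest C x) => [j|] Cij.
- exists i, j; split=> //; try exact: nearest_is_nearest.
  by apply/eqP => ij; apply: Cij; rewrite ij.
- by case: (no_nearest x xj i).
- by case: (no_nearest y yi j).
- by case: Cij.
Qed.

Lemma voronoi_gap_le_iff C j x t : voronoi C j x ->
  (`| (edist x (C j))%:E - minother C j x | <= t%:E)%E <->
  exists2 i, i != j & edist x (C i) <= edist x (C j) + t.
Proof.
move=> xj; have gap_ge0 : ((edist x (C j))%:E <= minother C j x)%E.
  by apply: le_bigmin; [exact: leey | move=> i ij; rewrite lee_fin xj].
split => [gap_le|[i ij xi]].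
- apply: contrapT => far.
  have : ((edist x (C j) + t)%:E < minother C j x)%E.
    apply/bigmin_gtP; split => [|i ij]; first exact: ltey.
    by rewrite lte_fin ltNge; apply/negP => xi; apply: far; exists i.
  move: gap_le; case: (minother C j x) => [r| |] //=.
  by rewrite lee_fin lte_fin ler_norml => /andP[? _]; lra.
- have : (minother C j x <= (edist x (C i))%:E)%E by exact: bigmin_le_cond.
  move: gap_ge0; case: (minother C j x) => [r| |] //=.
  by rewrite !lee_fin ler_norml => ? ?; apply/andP; split; lra.
Qed.

Lemma nearest_swap_margin C x y i j t : i != j ->
  is_nearest C y i -> is_nearest C x j -> 2 * edist x y <= t -> margin_nbhd C t x.
Proof.
move=> ij yi xj xy_le; exists j => //; split; first exact: is_nearest_voronoi.
apply/voronoi_gap_le_iff; first exact: is_nearest_voronoi.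
exists i => //; have := yi j; rewrite -ler_edist => yij.
have := edist_triangle x y (C i); have := edist_triangle y x (C j).
have := edistC x y; lra.
Qed.

Lemma nearest_swap_coord_le C x y i j a : is_nearest C y i ->
  `|C i a - C j a| <= 2 * edist x y + 2 * edist x (C j).
Proof.
move=> yi; have := yi j; rewrite -ler_edist => yij.
have := coord_le_edist (C i) (C j) a; have := edist_triangle (C i) y (C j).
have := edist_triangle y x (C j); have := edistC x y; have := edistC y (C i).
lra.
Qed.

End NearestCodeword.

Section NonmeasurableIntegral.
Local Open Scope ereal_scope.
Context d {T : measurableType d} {R : realType} (m : {measure set T -> \bar R}).
Import HBNNSimple.

(* The integral of a nonnegative function is a supremum over the simple functions below
   it, so monotonicity needs no measurability. *)
Lemma ge0_le_integral_nonmeas (f g : T -> \bar R) : (forall x, 0 <= f x) ->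
  (forall x, f x <= g x) -> \int[m]_x f x <= \int[m]_x g x.
Proof.
move=> f0 fg; have g0 x : 0 <= g x := le_trans (f0 x) (fg x).
rewrite !ge0_integralTE //; apply: ereal_sup_le => _ [h /= hf <-].
by exists h => //= x; exact: le_trans (hf x) (fg x).
Qed.

Lemma ae_ge0_le_integral_nonmeas (f g : T -> \bar R) : (forall x, 0 <= f x) ->
  (forall x, 0 <= g x) -> measurable_fun setT g ->
  {ae m, forall x, f x <= g x} -> \int[m]_x f x <= \int[m]_x g x.
Proof.
move=> f0 g0 mg fg; rewrite [leLHS]ge0_integralTE //.
apply: ge_ereal_sup => _ [h /= hf <-].
have := integral_nnsfun m measurableT h; rewrite patch_setT => <-.
apply: ae_ge0_le_integral => //.
- by move=> x _; rewrite lee_fin.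
- by apply/measurable_EFinP; exact: measurable_funP.
- by apply: filterS fg => x fgx _; exact: le_trans (hf x) fgx.
Qed.

End NonmeasurableIntegral.

Section Norms.
Context d {T : measurableType d} {R : realType} (P : probability T R).
Implicit Types f : T -> R.

(* [probability_setT] and [probability_setC] stated for the coercion of [P] to a measure,
   the form produced by [integral_cst], where the library versions do not rewrite. *)
Lemma probability_measure_setT : (P : {measure set T -> \bar R}) setT = 1%E.
Proof. exact: probability_setT. Qed.

Lemma probability_measure_setC A : measurable A ->
  (P : {measure set T -> \bar R}) (~` A) = (1 - (P : {measure set T -> \bar R}) A)%E.
Proof. exact: probability_setC. Qed.

Lemma probability_setT_gt0 : (0 < P setT)%E.
Proof. by rewrite probability_measure_setT lte01. Qed.

Lemma ess_sup_norm_ge0 f : (0 <= ess_sup P (fun w => (`|f w|)%:E))%E.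
Proof. by apply: ess_sup_ger => [|w]; [exact: probability_setT_gt0 | rewrite lee_fin]. Qed.

Lemma supnorm_ge0 f : 0 <= supnorm P f.
Proof. exact/fine_ge0/ess_sup_norm_ge0. Qed.

Lemma ae_le_supnorm f c : {ae P, forall w, `|f w| <= c} ->
  {ae P, forall w, `|f w| <= supnorm P f}.
Proof.
move=> fc; have s_fin : ess_sup P (fun w => (`|f w|)%:E) \is a fin_num.
  rewrite ge0_fin_numE ?ess_sup_norm_ge0 //; apply: (le_lt_trans (y := c%:E)) (ltey _).
  by apply/ess_supP; apply: filterS fc => w; rewrite lee_fin.
apply: filterS (ess_sup_ge P _) => w fw; rewrite -lee_fin /supnorm fineK //; exact: fw.
Qed.

Lemma L1norm_ge0 f : 0 <= L1norm P f.
Proof. by apply/fine_ge0/integral_ge0 => w _; rewrite lee_fin. Qed.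

End Norms.

Lemma ae_in_box d {T : measurableType d} {R : realType} {p : nat} (P : probability T R)
    (f : T -> 'I_p -> R) B :
  (forall b, {ae P, forall w, `|f w b| <= B}) -> {ae P, forall w, in_box `|B| (f w)}.
Proof.
move=> fB; apply: filter_forall => b; apply: filterS (fB b) => w fwB.
exact: le_trans fwB (ler_norm B).
Qed.

Lemma powR_sum_le {R : realType} {p : nat} (s : 'I_p -> R) a :
  0 < a -> (forall i, 0 <= s i) ->
  (\sum_i s i) `^ a <= p%:R `^ a * \sum_i s i `^ a.
Proof.
case: p s => [|n] s a_gt0 s_ge0; first by rewrite !big_ord0 powR0 ?gt_eqF // mulr0.
have [m _ s_max] := arg_maxP s (isT : xpredT ord0).
have sum_le : \sum_i s i <= n.+1%:R * s m.
  apply: le_trans (ler_sum _ (fun i _ => s_max i isT)) _.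
  by rewrite sumr_const card_ord mulr_natl.
have sum_ge0 : 0 <= \sum_i s i by exact: sumr_ge0.
apply: le_trans (ge0_ler_powR (ltW a_gt0) _ _ sum_le) _; rewrite ?nnegrE ?mulr_ge0 //.
rewrite powRM // ler_wpM2l ?powR_ge0 // (bigD1 m) //= lerDl.
by apply: sumr_ge0 => i _; exact: powR_ge0.
Qed.

Section MarginEvent.
Context {R : realType} {p k : nat} d {T : measurableType d}.
Variable mu : T -> 'I_p -> R.
Hypothesis mmu : forall a, measurable_fun setT (fun w => mu w a).

Lemma measurable_edist c : measurable_fun setT (fun w => edist (mu w) c).
Proof.
apply: measurableT_comp (continuous_measurable_fun (@sqrt_continuous R)) _.
by apply: measurable_sum => i; apply/measurable_funX/measurable_funB.
Qed.

Lemma measurable_margin_nbhd (C : 'I_k -> 'I_p -> R) t :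
  measurable (mu @^-1` margin_nbhd C t).
Proof.
have mle (f g : T -> R) : measurable_fun setT f -> measurable_fun setT g ->
    measurable [set w | f w <= g w].
  by move=> mf mg; rewrite -[X in measurable X]setTI; exact: measurable_fun_le.
set e := fun j w => edist (mu w) (C j).
rewrite (_ : mu @^-1` _ = \bigcup_(j in setT)
   ((\bigcap_(i in [set i | i != j]) [set w | e j w <= e i w]) `&`
    \bigcup_(i in [set i | i != j]) [set w | e i w <= e j w + t])).
  apply: fin_bigcup_measurable => [|j _]; first exact: finite_finset.
  apply: measurableI.
    apply: fin_bigcap_measurable => [|i _]; first exact: finite_finset.
    exact/mle/measurable_edist/measurable_edist.
  apply: fin_bigcup_measurable => [|i _]; first exact: finite_finset.
  exact/mle/measurable_funD/measurable_cst/measurable_edist/measurable_edist.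
apply/seteqP; split => w [j _ [xj gap]]; exists j => //.
  by split=> //; have [i ij xi] := (voronoi_gap_le_iff t xj).1 gap; exists i.
by split=> //; apply/(voronoi_gap_le_iff t xj).2; case: gap => i ij xi; exists i.
Qed.

Lemma margin_prob_le (P : probability T R) kappa alpha cm (C : 'I_k -> 'I_p -> R) t :
  0 < kappa -> 0 <= alpha -> margin_condition (k := k) P mu kappa alpha cm ->
  optimal P mu C -> 0 <= t ->
  (P (mu @^-1` margin_nbhd C t) <= ((`|cm| + kappa `^ (- alpha)) * t `^ alpha)%:E)%E.
Proof.
move=> kappa_gt0 alpha_ge0 margin Copt t_ge0.
have [t_le|kappa_lt] := lerP t kappa.
  apply: le_trans (margin t t_ge0 t_le C Copt) _.
  by rewrite lee_fin ler_wpM2r ?powR_ge0 // (le_trans (ler_norm cm)) // lerDl powR_ge0.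
apply: le_trans (probability_le1 P (measurable_margin_nbhd C t)) (lee_tofin _).
have kappa_pow_gt0 : 0 < kappa `^ alpha by exact: powR_gt0.
have pow_le : kappa `^ alpha <= t `^ alpha.
  by apply: (ge0_ler_powR alpha_ge0) => //; rewrite ?nnegrE ltW.
rewrite powRN mulrDl ler_wpDl ?mulr_ge0 ?powR_ge0 //.
by rewrite mulrC ler_pdivlMr // mul1r.
Qed.

End MarginEvent.

Section OptimalCodebook.
Context {R : realType} {p k : nat} d {T : measurableType d}.
Variables (P : probability T R) (mu : T -> 'I_p -> R) (B : R).
Hypothesis mu_box : {ae P, forall w, in_box B (mu w)}.

Let E := p%:R * (2 * B).

Lemma ae_box_witness : exists w, in_box B (mu w).
Proof.
have PF := ae_properfilter_algebraOfSetsType (probability_setT_gt0 P).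
exact: filter_ex mu_box.
Qed.

Lemma risk_le_box_codeword (C : 'I_k -> 'I_p -> R) l :
  in_box B (C l) -> (risk P mu C <= (E ^+ 2)%:E)%E.
Proof.
move=> Cl_box; have E_ge0 : 0 <= E.
  exact: le_trans (sqrtr_ge0 _) (edist_le_box Cl_box Cl_box).
apply: le_trans (_ : \int[P]_w (cst (E ^+ 2)%:E) w <= _)%E; last first.
  by rewrite integral_cst // probability_measure_setT mule1.
rewrite /risk; apply: ae_ge0_le_integral_nonmeas => [w|w||].
- by rewrite lee_fin sqdist_ge0.
- by rewrite lee_fin sqr_ge0.
- exact: measurable_cst.
apply: filterS mu_box => w w_box; rewrite lee_fin.
have [j -> wj] := Pi_nearest C (mu w) l.
apply: le_trans (wj l) _.
rewrite -(sqr_sqrtr (sqdist_ge0 _ _)) ler_sqr ?nnegrE ?sqrtr_ge0 //.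
exact: edist_le_box.
Qed.

Lemma optimal_risk_le (C : 'I_k -> 'I_p -> R) (i0 : 'I_k) :
  optimal P mu C -> (risk P mu C <= (E ^+ 2)%:E)%E.
Proof.
move=> [[C_inj C_img] C_opt]; have [w0 w0_box] := ae_box_witness.
have [[l Cl]|no_l] := pselect (exists l, C l = mu w0).
  by apply: (@risk_le_box_codeword _ l); rewrite Cl.
pose C' j := if j == i0 then mu w0 else C j.
have C'_codebook : codebook_in mu C'.
  split=> [j1 j2|j]; last by rewrite /C'; case: eqP => _; [exists w0 | exact: C_img].
  rewrite /C'; case: eqP => [->|_]; case: eqP => [->|_] //.
  - by move=> Ce; case: no_l; exists j2.
  - by move=> Ce; case: no_l; exists j1.
  - exact: C_inj.
apply: le_trans (C_opt C' C'_codebook) _.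
by apply: (@risk_le_box_codeword _ i0); rewrite /C' eqxx.
Qed.

Lemma risk_le_witness (C : 'I_k -> 'I_p -> R) r : 0 <= r ->
  (risk P mu C <= r%:E)%E ->
  exists w, in_box B (mu w) /\ sqdist (mu w) (Pi C (mu w)) <= r + 1.
Proof.
move=> r_ge0 risk_le; apply: contrapT => far.
have [N [mN PN0 N_box]] := mu_box.
suff : ((r + 1)%:E <= risk P mu C)%E.
  by move=> /le_trans/(_ risk_le); rewrite lee_fin; lra.
rewrite /risk; apply: (@le_trans _ _ (\int[P]_w (cst (r + 1)%:E \_ (~` N)) w)%E).
  rewrite -integral_mkcond integral_cst; last exact: measurableC.
  have PN0' : (P : {measure set T -> \bar R}) N = 0%E := PN0.
  by rewrite probability_measure_setC // PN0' sube0 mule1.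
apply: ge0_le_integral_nonmeas => w.
  by apply: erestrict_ge0 => {}w _; rewrite lee_fin addr_ge0.
rewrite /patch; case: ifPn => [/set_mem w_good|_]; last by rewrite lee_fin sqdist_ge0.
have w_box : in_box B (mu w) by apply: contrapT => w_out; exact/w_good/N_box.
by rewrite lee_fin ltW // ltNge; apply/negP => w_near; apply: far; exists w.
Qed.

Lemma optimal_nearest_edist_le (C : 'I_k -> 'I_p -> R) x j : optimal P mu C ->
  in_box B x -> is_nearest C x j -> edist x (C j) <= E + Num.sqrt (E ^+ 2 + 1).
Proof.
move=> Copt x_box xj.
have [w [w_box w_near]] := risk_le_witness (sqr_ge0 E) (optimal_risk_le j Copt).
have [l Pi_l _] := Pi_nearest C (mu w) j.
apply: le_trans (_ : edist x (C l) <= _); first by rewrite ler_edist; exact: xj.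
apply: le_trans (edist_triangle x (mu w) (C l)) _.
apply: lerD; first exact: edist_le_box.
by rewrite ler_sqrt ?addr_ge0 ?sqr_ge0 // -Pi_l.
Qed.

End OptimalCodebook.

Section CoordinateError.
Context {R : realType} {p k : nat} d {T : measurableType d}.
Variables (P : probability T R) (mu muhat : T -> 'I_p -> R) (C : 'I_k -> 'I_p -> R) (B : R).
Hypotheses (mmu : forall a, measurable_fun setT (fun w => mu w a))
  (mu_box : {ae P, forall w, in_box B (mu w)})
  (muhat_box : {ae P, forall w, in_box B (muhat w)})
  (Copt : optimal P mu C).

Let E := p%:R * (2 * B).
Let t := 2 * \sum_b supnorm P (fun w => muhat w b - mu w b).

Lemma ae_edist_le_supnorm :
  {ae P, forall w, edist (mu w) (muhat w) <= \sum_b supnorm P (fun w => muhat w b - mu w b)}.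
Proof.
have coord_err b : {ae P, forall w,
    `|muhat w b - mu w b| <= supnorm P (fun w => muhat w b - mu w b)}.
  apply: (@ae_le_supnorm _ _ _ _ _ (2 * B)).
  apply: filterS2 mu_box muhat_box => w x_box y_box.
  by apply: le_trans (ler_normB _ _) _; have := x_box b; have := y_box b; lra.
apply: filterS (filter_forall _ coord_err) => w w_err.
apply: le_trans (edist_le_sum _ _) (ler_sum _ _) => b _.
by rewrite distrC; exact: w_err.
Qed.

Lemma integral_Pi_diff_le_margin a :
  (\int[P]_w (`|Pi C (muhat w) a - Pi C (mu w) a|)%:E <=
   (2 * (E + Num.sqrt (E ^+ 2 + 1)) + 2 * E)%:E * P (mu @^-1` margin_nbhd C t))%E.
Proof.
set D := 2 * (E + _) + _; set S := mu @^-1` _.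
have mS : measurable S := measurable_margin_nbhd mmu C t.
have D_ge0 : 0 <= D.
  have [w0 w0_box] := ae_box_witness mu_box.
  have E_ge0 : 0 <= E := le_trans (sqrtr_ge0 _) (edist_le_box w0_box w0_box).
  by have := sqrtr_ge0 (E ^+ 2 + 1); rewrite /D; lra.
have pointwise : {ae P, forall w,
    (`|Pi C (muhat w) a - Pi C (mu w) a|)%:E <= (cst D%:E \_ S) w}%E.
  apply: filterS2 (filterI mu_box muhat_box) ae_edist_le_supnorm => w [x_box y_box] xy_le.
  have [Pi_eq|/Pi_neq[i [j [ij -> -> yi xj]]]] :=
    pselect (Pi C (muhat w) = Pi C (mu w)).
    by rewrite Pi_eq subrr normr0; apply: erestrict_ge0 => ? _; rewrite lee_fin.
  rewrite /patch mem_set /=; last by apply: nearest_swap_margin ij yi xj _; rewrite ler_pM2l.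
  rewrite lee_fin; apply: le_trans (nearest_swap_coord_le (mu w) j a yi) _.
  have := edist_le_box x_box y_box; have := optimal_nearest_edist_le mu_box Copt x_box xj.
  rewrite /D /E; lra.
apply: le_trans (ae_ge0_le_integral_nonmeas _ _ _ pointwise) _.
- by move=> w; rewrite lee_fin.
- by apply: erestrict_ge0 => w _; rewrite lee_fin.
- exact/(measurable_restrictT _ _).1/measurable_cst.
by rewrite -integral_mkcond integral_cst.
Qed.

End CoordinateError.

Theorem lemmaA2 (R : realType) (p k : nat) (B kappa alpha cm : R) :
  0 < kappa -> 0 < alpha ->
  exists K : R, 0 < K /\
  forall (d : measure_display) (T : measurableType d) (P : probability T R)
    (mu muhat : T -> 'I_p -> R) (Cs : 'I_k -> 'I_p -> R),
    (forall a, measurable_fun setT (fun w => mu w a)) ->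
    (forall a, measurable_fun setT (fun w => muhat w a)) ->
    (forall a, {ae P, forall w, `|mu w a| <= B}) ->
    (forall a, {ae P, forall w, `|muhat w a| <= B}) ->
    margin_condition (k:=k) P mu kappa alpha cm ->
    optimal P mu Cs ->
    forall a : 'I_p,
    (\int[P]_w (`|Pi Cs (muhat w) a - Pi Cs (mu w) a|)%:E <=
     (K * ((\big[Num.max/0]_(j < k)
               supnorm P (fun w => ind_zeta Cs j (muhat w) - ind_zeta Cs j (mu w)))
             * (\sum_(b < p) L1norm P (fun w => muhat w b - mu w b))
           + \sum_(b < p) (supnorm P (fun w => muhat w b - mu w b)) `^ alpha))%:E)%E.
Proof.
move=> kappa_gt0 alpha_gt0.
pose E := p%:R * (2 * `|B|).
pose D := 2 * (E + Num.sqrt (E ^+ 2 + 1)) + 2 * E.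
pose c := `|cm| + kappa `^ (- alpha).
pose K := D * c * (2 * p%:R) `^ alpha.
have E_ge0 : 0 <= E by rewrite !mulr_ge0.
have D_ge0 : 0 <= D by have := sqrtr_ge0 (E ^+ 2 + 1); rewrite /D; lra.
have c_ge0 : 0 <= c by rewrite addr_ge0 ?powR_ge0.
have K_ge0 : 0 <= K by apply: mulr_ge0; [exact: mulr_ge0 | exact: powR_ge0].
exists (K + 1); split => [|d T P mu muhat C mmu _ mu_B muhat_B margin Copt a].
  by rewrite ltr_pwDr.
set A := \big[Num.max/0]_(j < k) _.
set L := \sum_(b < p) L1norm _ _; set S := \sum_(b < p) _ `^ alpha.
have AL_ge0 : 0 <= A * L.
  by rewrite mulr_ge0 ?bigmax_ge_id //; apply: sumr_ge0 => b _; exact: L1norm_ge0.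
have S_ge0 : 0 <= S by apply: sumr_ge0 => b _; exact: powR_ge0.
have err_ge0 : 0 <= \sum_b supnorm P (fun w => muhat w b - mu w b).
  by apply: sumr_ge0 => b _; exact: supnorm_ge0.
apply: le_trans (integral_Pi_diff_le_margin mmu (ae_in_box mu_B) (ae_in_box muhat_B) Copt a) _.
apply: le_trans (lee_wpmul2l _ (margin_prob_le mmu kappa_gt0 (ltW alpha_gt0) margin Copt _)) _.
- by rewrite lee_fin.
- by rewrite mulr_ge0.
rewrite -EFinM lee_fin; apply: le_trans (_ : K * S <= _); last by apply: ler_pM => //; lra.
rewrite /K -!mulrA !ler_wpM2l // !powRM // -mulrA ler_wpM2l ?powR_ge0 //.
by apply: powR_sum_le => // b; exact: supnorm_ge0.
Qed.
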